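(* For every signature $\sigma$, the formula $\bigsqcup_{\mathcal F\in\mathbb F_\sigma}\Phi^{\mathcal F}$ is satisfied by every causal team over $\sigma$, i.e. $\models^c\bigsqcup_{\mathcal F\in\mathbb F_\sigma}\Phi^{\mathcal F}$.
   Context: A signature $\sigma=(\mathrm{Dom},\mathrm{Ran})$: $\mathrm{Dom}$ nonempty finite set of variables, each with nonempty finite range $\mathrm{Ran}(X)$; $\mathbf X=\mathbf x$ abbreviates $X_1=x_1\wedge\dots\wedge X_n=x_n$ ($\mathbf x\in\prod\mathrm{Ran}(X_i)$), inconsistent if it contains $X=x,X=x'$ with $x\ne x'$. $\mathcal{CO}[\sigma]$-formulas: $\alpha::=X=x\mid\neg\alpha\mid\alpha\wedge\alpha\mid\alpha\vee\alpha\mid\mathbf X=\mathbf x\;\Box\!\!\rightarrow\alpha$; $\alpha\supset\beta$ abbreviates $\neg\alpha\vee\beta$; $\sqcup$ is the global disjunction ($T\models\varphi\sqcup\psi$ iff $T\models\varphi$ or $T\models\psi$). A system of functions $\mathcal F$: for each $V\in\mathrm{En}(\mathcal F)\subseteq\mathrm{Dom}$ parents $PA^{\mathcal F}_V\subseteq\mathrm{Dom}\setminus\{V\}$ and $\mathcal F_V:\mathrm{Ran}(PA^{\mathcal F}_V)\to\mathrm{Ran}(V)$; $\mathrm{Ex}(\mathcal F)=\mathrm{Dom}\setminus\mathrm{En}(\mathcal F)$; only recursive systems (acyclic parent graph), forming the finite set $\mathbb F_\sigma$. An assignment $s$ is compatible with $\mathcal F$ if $s(V)=\mathcal F_V(s(PA^{\mathcal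 F}_V))$ for $V\in\mathrm{En}(\mathcal F)$. A causal team $T=(T^-,\mathcal F)$ consists of $\mathcal F\in\mathbb F_\sigma$ and a set $T^-$ of assignments compatible with $\mathcal F$ (all teams with empty team component identified as $\emptyset$); causal subteams are $(S^-,\mathcal F)$ with $S^-\subseteq T^-$. For consistent $\mathbf X=\mathbf x$: $\mathcal F_{\mathbf X=\mathbf x}$ restricts $\mathcal F$ to $\mathrm{En}(\mathcal F)\setminus\mathbf X$, $s^{\mathcal F}_{\mathbf X=\mathbf x}$: $X_i\mapsto x_i$, $V\mapsto s(V)$ on $\mathrm{Ex}(\mathcal F)\setminus\mathbf X$, $V\mapsto\mathcal F_V(s^{\mathcal F}_{\mathbf X=\mathbf x}(PA^{\mathcal F}_V))$ on $\mathrm{En}(\mathcal F)\setminus\mathbf X$; $T_{\mathbf X=\mathbf x}=(\{s^{\mathcal F}_{\mathbf X=\mathbf x}:s\in T^-\},\mathcal F_{\mathbf X=\mathbf x})$. $\models^c$: $T\models X=x$ iff $s(X)=x$ for all $s\in T^-$; $T\models\neg\alpha$ iff $(\{s\},\mathcal F)\not\models\alpha$ for all $s\in T^-$; $\wedge$ classical; $T\models\varphi\vee\psi$ iff there are causal subteams $T_1,T_2$ with $T_1^-\cup T_2^-=T^-$, $T_1\models\varphi$, $T_2\models\psi$; $T\models\mathbf X=\mathbf x\;\Box\!\!\rightarrow\varphi$ iff $\mathbf X=\mathbf x$ inconsistent or $T_{\mathbf X=\mathbf x}\models\varphi$. $\mathrm{Cn}(\mathcal F)=\{V\in\mathrm{En}(\mathcal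 F):\mathcal F_V\text{ constant}\}$. With $\mathbf W_V$ listing $\mathrm{Dom}\setminus\{V\}$: $\Phi^{\mathcal F}:=\bigwedge_{V\in\mathrm{En}(\mathcal F)\setminus\mathrm{Cn}(\mathcal F)}\eta(V)\wedge\bigwedge_{V\notin\mathrm{En}(\mathcal F)\setminus\mathrm{Cn}(\mathcal F)}\xi(V)$, where $\eta(V)$ is the conjunction of all $(\mathbf W=\mathbf w\wedge PA^{\mathcal F}_V=\mathbf p)\;\Box\!\!\rightarrow V=\mathcal F_V(\mathbf p)$ ($\mathbf W$ listing $\mathrm{Dom}\setminus(PA^{\mathcal F}_V\cup\{V\})$, $\mathbf w\in\mathrm{Ran}(\mathbf W)$, $\mathbf p\in\mathrm{Ran}(PA^{\mathcal F}_V)$) and $\xi(V)$ is the conjunction of all $V=v\supset(\mathbf W_V=\mathbf w\;\Box\!\!\rightarrow V=v)$ ($v\in\mathrm{Ran}(V)$, $\mathbf w\in\mathrm{Ran}(\mathbf W_V)$). *)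

From mathcomp Require Import all_boot.
From Stdlib Require List.
Set Implicit Arguments.
Unset Strict Implicit.
Unset Printing Implicit Defensive.

Section CausalTeams.

(* Signature sigma = (Dom, Ran): Dom is the finite type V, Ran X a finite type. *)
Variable V : finType.
Variable Ran : V -> finType.
Hypothesis HV : 0 < #|V|.
Hypothesis HR : forall X : V, 0 < #|Ran X|.

Definition asg := {dffun forall X : V, Ran X}.

Definition lit := {X : V & Ran X}.

Inductive form :=
| Atom (X : V) (x : Ran X)
| Neg (a : form)
| And (a b : form)
| Or (a b : form)
| Cf (l : seq lit) (a : form).

Definition consistent (l : seq lit) : Prop :=
  forall p q : lit, List.In p l -> List.In q l -> tag p = tag q -> p = q.

(* Systems of functions: endogenous set, parent sets, and for each V a
   function F_V : Ran(PA_V) -> Ran(V), represented as a function of full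
   assignments depending only on the values on PA_V (see is_sysf). *)
Record sysf := Sysf {
  En : {set V};
  PA : V -> {set V};
  fn : forall W : V, asg -> Ran W
}.

Definition is_sysf (F : sysf) : Prop :=
  forall W, W \in En F ->
    W \notin PA F W /\
    (forall s s' : asg, (forall Z, Z \in PA F W -> s Z = s' Z) ->
        fn F W s = fn F W s').

Definition pedge (F : sysf) : rel V := fun Z W => (W \in En F) && (Z \in PA F W).

Definition recursive (F : sysf) : Prop :=
  forall Z W, pedge F Z W -> ~~ connect (pedge F) W Z.

Definition in_Fsigma (F : sysf) : Prop := is_sysf F /\ recursive F.

Definition compatible (F : sysf) (s : asg) : Prop :=
  forall W, W \in En F -> s W = fn F W s.

Definition causal_team (F : sysf) (T : asg -> Prop) : Prop :=
  forall s, T s -> compatible F s.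

Definition in_ante (l : seq lit) (W : V) : bool := has (fun p => tag p == W) l.

Definition interv_sys (F : sysf) (l : seq lit) : sysf :=
  Sysf [set W in En F | ~~ in_ante l W] (PA F) (fn F).

(* s^F_{X=x}, characterised by its defining equations (for recursive F
   these determine it uniquely). *)
Definition interv_asg (F : sysf) (l : seq lit) (s s' : asg) : Prop :=
  (forall p, List.In p l -> s' (tag p) = tagged p) /\
  (forall W, W \notin En F -> ~~ in_ante l W -> s' W = s W) /\
  (forall W, W \in En F -> ~~ in_ante l W -> s' W = fn F W s').

Definition interv_team (F : sysf) (l : seq lit) (T : asg -> Prop) : asg -> Prop :=
  fun s' => exists s, T s /\ interv_asg F l s s'.

Fixpoint sat (F : sysf) (T : asg -> Prop) (phi : form) : Prop :=
  match phi with
  | Atom X x => forall s, T s -> s X = x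
  | Neg a => forall s, T s -> ~ sat F (fun t => t = s) a
  | And a b => sat F T a /\ sat F T b
  | Or a b => exists T1 T2 : asg -> Prop,
      (forall s, T1 s -> T s) /\ (forall s, T2 s -> T s) /\
      (forall s, T s -> T1 s \/ T2 s) /\ sat F T1 a /\ sat F T2 b
  | Cf l a => ~ consistent l \/ sat (interv_sys F l) (interv_team F l T) a
  end.

Definition Imp (a b : form) : form := Or (Neg a) b.

Definition v0 : V := @enum_val V predT (Ordinal HV).
Definition r0 (X : V) : Ran X := @enum_val (Ran X) predT (Ordinal (HR X)).

(* A tautology, used only as the value of an empty conjunction. *)
Definition top : form := Or (Atom (r0 v0)) (Neg (Atom (r0 v0))).

Definition bigAnd (l : seq form) : form :=
  if l is a :: l' then foldr And a l' else top.

Definition ante_except (W0 : V) (t : asg) : seq lit :=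
  [seq Tagged Ran (t W) | W <- enum V & W != W0].

Definition constantb (F : sysf) (W : V) : bool :=
  [forall s : asg, [forall s' : asg, fn F W s == fn F W s']].

Definition in_EnCn (F : sysf) (W : V) : bool := (W \in En F) && ~~ constantb F W.

(* eta(V): all (W = w /\ PA_V = p) []-> V = F_V(p); the antecedent
   W = w /\ PA_V = p ranges over all assignments to Dom \ {V}. *)
Definition eta (F : sysf) (W0 : V) : form :=
  bigAnd [seq Cf (ante_except W0 t) (Atom (fn F W0 t)) | t <- enum asg].

Definition xi (W0 : V) : form :=
  bigAnd [seq Imp (Atom v) (Cf (ante_except W0 t) (Atom v))
         | v <- enum (Ran W0), t <- enum asg].

Definition Phi (F : sysf) : form :=
  And (bigAnd [seq eta F W | W <- enum V & in_EnCn F W])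
      (bigAnd [seq xi W | W <- enum V & ~~ in_EnCn F W]).

End CausalTeams.

(* The team's own system F already witnesses the global disjunction.
   Intervening on every variable except W fixes the parents of an
   endogenous W, so the intervened assignment gives W the value
   F_W(parents), which is eta(W).  A variable that is exogenous or has a
   constant function is untouched by such an intervention: exogenous values
   are copied and, by compatibility, a constant function returns the value
   the variable already had; splitting the team on W = v then gives xi(W). *)
From mathcomp Require Import all_boot.
From Stdlib Require List.

Set Implicit Arguments.
Unset Strict Implicit.

Lemma eq_or_neq (A : eqType) (a b : A) : a = b \/ a <> b.
Proof. by case: (eqVneq a b) => [|/eqP]; [left | right]. Qed.

Lemma InP (T : eqType) (x : T) (s : seq T) : reflect (List.In x s) (x \in s).
Proof.
apply: (iffP idP); elim: s => [//|y s IH]; rewrite ?inE.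
- by case/orP=> [/eqP->|/IH]; [left|right].
- by case=> [->|/IH->]; rewrite ?eqxx ?orbT.
Qed.

Lemma In_map_inv {A B : Type} {f : A -> B} {s : seq A} {b : B} :
  List.In b (map f s) -> exists2 a, List.In a s & b = f a.
Proof.
elim: s => [//|y s IH] /= [<-|/IH [a Ha ->]]; first by exists y => //; left.
by exists a; first right.
Qed.

Lemma In_allpairs_inv {A B C : Type} {f : A -> B -> C} {s : seq A} {t : seq B} {c : C} :
  List.In c [seq f x y | x <- s, y <- t] -> exists x y, c = f x y.
Proof.
elim: s => [//|x s IH] /= /List.in_app_iff [|/IH //].
by move/(@In_map_inv _ _ (f x))=> [y _ ->]; exists x, y.
Qed.

Section CausalTeamSemantics.

Variables (V : finType) (Ran : V -> finType).
Implicit Types (F : sysf Ran) (T : asg Ran -> Prop) (phi : form Ran).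

Lemma sat_Or_cover F T (P Q : asg Ran -> Prop) phi psi :
  (forall s, T s -> P s \/ Q s) ->
  sat F (fun s => T s /\ P s) phi -> sat F (fun s => T s /\ Q s) psi ->
  sat F T (Or phi psi).
Proof.
move=> HPQ Hphi Hpsi; exists (fun s => T s /\ P s), (fun s => T s /\ Q s).
split; first by move=> s [].
split; first by move=> s [].
by split=> // s Ts; case: (HPQ s Ts); [left | right].
Qed.

Lemma sat_Neg_Atom F T (X : V) (x : Ran X) :
  (forall s, T s -> s X <> x) -> sat F T (Neg (Atom x)).
Proof. by move=> Hx s /Hx Hsx /(_ s erefl). Qed.

Lemma sat_Imp_Atom F T (X : V) (x : Ran X) phi :
  sat F (fun s => T s /\ s X = x) phi -> sat F T (Imp (Atom x) phi).
Proof.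
apply: (sat_Or_cover (P := fun s => s X <> x)).
  by move=> s _; rewrite or_comm; exact: eq_or_neq.
by apply: sat_Neg_Atom => s [].
Qed.

Lemma sat_Cf_Atom F T (l : seq (lit Ran)) (X : V) (x : Ran X) :
  (forall s s', T s -> interv_asg F l s s' -> s' X = x) -> sat F T (Cf l (Atom x)).
Proof. by move=> Hx; right=> s' [s [Ts Hs']]; exact: Hx Hs'. Qed.

Lemma ante_except_notin (W : V) (t : asg Ran) : ~~ in_ante (ante_except W t) W.
Proof.
rewrite /in_ante /ante_except has_map; apply/hasPn => Z.
by rewrite mem_filter => /andP[].
Qed.

Lemma interv_ante_except_other F (W : V) (t s s' : asg Ran) (Z : V) :
  interv_asg F (ante_except W t) s s' -> Z != W -> s' Z = t Z.
Proof.
move=> [Hlit _] HZ; apply: (Hlit (Tagged Ran (t Z))); apply/InP.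
by apply/mapP; exists Z; rewrite // mem_filter HZ mem_enum.
Qed.

Lemma interv_ante_except_self F (W : V) (t s s' : asg Ran) :
  interv_asg F (ante_except W t) s s' -> W \in En F -> s' W = fn F W s'.
Proof. by move=> [_ [_ Hen]] /Hen; apply; exact: ante_except_notin. Qed.

Lemma interv_ante_except_fixed F (W : V) (t s s' : asg Ran) :
  compatible F s -> ~~ in_EnCn F W ->
  interv_asg F (ante_except W t) s s' -> s' W = s W.
Proof.
move=> Hs HW Hs'; case: (boolP (W \in En F)) => HEn; last first.
  by case: Hs' => _ [Hex _]; apply: Hex HEn (ante_except_notin W t).
move: HW; rewrite /in_EnCn HEn negbK => /forallP Hcst.
rewrite (interv_ante_except_self Hs' HEn) (Hs W HEn).
exact/eqP/(forallP (Hcst s')).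
Qed.

Section BigConjunction.

Hypotheses (HV : 0 < #|V|) (HR : forall X : V, 0 < #|Ran X|).

Lemma sat_top F T : sat F T (top HV HR).
Proof.
apply: (sat_Or_cover (P := fun s => s (v0 HV) = r0 HR (v0 HV))) => [s _||].
- exact: eq_or_neq.
- by move=> s [].
- by apply: sat_Neg_Atom => s [].
Qed.

Lemma sat_bigAnd F T (l : seq (form Ran)) :
  (forall a, List.In a l -> sat F T a) -> sat F T (bigAnd HV HR l).
Proof.
case: l => [_|a l]; first exact: sat_top.
elim: l a => [|b l IH] a Hl /=; first by apply: Hl; left.
split; first by apply: Hl; right; left.
by apply: IH => c [<-|Hc]; apply: Hl; [left|right; right].
Qed.

Lemma sat_eta F T (W : V) : is_sysf F -> W \in En F -> sat F T (eta HV HR F W).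
Proof.
move=> HF HEn; apply: sat_bigAnd => a /In_map_inv[t _ ->].
apply: sat_Cf_Atom => s s' _ Hs'.
have [HWpa Hpa] := HF W HEn.
rewrite (interv_ante_except_self Hs' HEn); apply: Hpa => Z HZ.
apply: interv_ante_except_other Hs' _.
by apply: contraNneq HWpa => ZW; rewrite -{1}ZW.
Qed.

Lemma sat_xi F T (W : V) : causal_team F T -> ~~ in_EnCn F W -> sat F T (xi HV HR W).
Proof.
move=> HT HW; apply: sat_bigAnd => a /In_allpairs_inv[v [t ->]].
apply/sat_Imp_Atom/sat_Cf_Atom => s s' [Ts <-].
exact: interv_ante_except_fixed (HT s Ts) HW.
Qed.

Lemma sat_Phi_self F T : is_sysf F -> causal_team F T -> sat F T (Phi HV HR F).
Proof.
move=> HF HT; split; apply: sat_bigAnd => a /In_map_inv[W /InP];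
  rewrite mem_filter => /andP[HW _] ->.
- by apply: sat_eta HF _; case/andP: HW.
- exact: sat_xi HT HW.
Qed.

End BigConjunction.

End CausalTeamSemantics.

Theorem corollary3p6 (V : finType) (Ran : V -> finType)
    (HV : 0 < #|V|) (HR : forall X : V, 0 < #|Ran X|)
    (F : sysf Ran) (T : asg Ran -> Prop) :
  in_Fsigma F -> causal_team F T ->
  exists G : sysf Ran, in_Fsigma G /\ sat F T (Phi HV HR G).
Proof. by move=> HF HT; exists F; split; last exact: sat_Phi_self (proj1 HF) HT. Qed.
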